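(* Let $(K^{(n)})_{n\ge1}$ be a consistent family of Markov kernels, $K^{(n)}$ an order-preserving Markov kernel on $\mathbb{R}^n$ for each $n$. Then for all $n\ge2$ and every bounded Borel supermodular $f:\mathbb{R}^n\to\mathbb{R}$, $K^{(n)}f$ is a bounded Borel supermodular function.
   Context: $f$ is supermodular if $f(\mathbf{x})+f(\mathbf{y})\le f(\mathbf{x}\vee\mathbf{y})+f(\mathbf{x}\wedge\mathbf{y})$ for all $\mathbf{x},\mathbf{y}$, with $\vee,\wedge$ componentwise max and min. $K^{(n)}f(\mathbf{x})=\int f(\mathbf{y})K^{(n)}(\mathbf{x},d\mathbf{y})$. A kernel $K$ on $\mathbb{R}^n$ is order-preserving if $K(\mathbf{x},\mathbb{R}^n_{\mathbf{x}})=1$ for all $\mathbf{x}$, where $\mathbb{R}^n_{\mathbf{x}}=\{\mathbf{y}:\forall i,j,\ x_i\le x_j\Rightarrow y_i\le y_j\}$. The family is consistent if $K^{(n)}(\mathbf{x},(\pi^n_{i_1,\dots,i_k})^{-1}(B))=K^{(k)}(\pi^n_{i_1,\dots,i_k}(\mathbf{x}),B)$ for all $1\le k\le n$, $i_1,\dots,i_k\in\{1,\dots,n\}$ (repetitions allowed), $\mathbf{x}\in\mathbb{R}^n$ and Borel $B\subset\mathbb{R}^k$, where $\pi^n_{i_1,\dots,i_k}(\mathbf{x})=(x_{i_1},\dots,x_{i_k})$. *)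

From HB Require Import structures.
From mathcomp Require Import all_boot all_order all_algebra.
From mathcomp Require Import all_classical all_reals all_analysis.
Set Implicit Arguments. Unset Strict Implicit. Unset Printing Implicit Defensive.
Import Order.TTheory GRing.Theory Num.Theory.
Import numFieldNormedType.Exports.
Local Open Scope classical_set_scope.
Local Open Scope ring_scope.

(* R^n, represented by row vectors 'rV[R]_n (with the product/matrix topology),
   equipped with its Borel sigma-algebra: the sigma-algebra generated by the
   open sets. *)
Definition Rn (R : realType) (n : nat) : measurableType _ :=
  g_sigma_algebraType [set A : set 'rV[R]_n | open A].

Definition coord (R : realType) (n : nat) (x : Rn R n) (i : 'I_n) : R :=
  (x : 'rV[R]_n) ord0 i.

Definition vmax (R : realType) (n : nat) (x y : Rn R n) : Rn R n :=
  \row_i Num.max (coord x i) (coord y i).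
Definition vmin (R : realType) (n : nat) (x y : Rn R n) : Rn R n :=
  \row_i Num.min (coord x i) (coord y i).

Definition supermodular (R : realType) (n : nat) (f : Rn R n -> R) : Prop :=
  forall x y : Rn R n, f x + f y <= f (vmax x y) + f (vmin x y).

Definition bounded_fun_R (T : Type) (R : realType) (f : T -> R) : Prop :=
  exists M : R, forall x, `|f x| <= M.

(* K f (x) = \int f(y) K(x, dy) (real-valued; finite for bounded Borel f) *)
Definition kapply (R : realType) (n : nat) (K : R.-pker (Rn R n) ~> (Rn R n))
  (f : Rn R n -> R) : Rn R n -> R :=
  fun x => Rintegral (K x) setT f.

Definition order_set (R : realType) (n : nat) (x : Rn R n) : set (Rn R n) :=
  [set y | forall i j : 'I_n, coord x i <= coord x j -> coord y i <= coord y j].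

Definition order_preserving (R : realType) (n : nat)
  (K : R.-pker (Rn R n) ~> (Rn R n)) : Prop :=
  forall x : Rn R n, K x (order_set x) = 1%E.

Definition proj (R : realType) (n k : nat) (idx : 'I_k -> 'I_n) (x : Rn R n)
  : Rn R k := \row_j coord x (idx j).

Definition consistent (R : realType) (K : forall n : nat, R.-pker (Rn R n) ~> (Rn R n))
  : Prop :=
  forall (n k : nat), (1 <= k)%N -> (k <= n)%N ->
  forall (idx : 'I_k -> 'I_n) (x : Rn R n) (B : set (Rn R k)),
    measurable B ->
    K n x (proj idx @^-1` B) = K k (proj idx x) B.

From Pilot Require (* Re-imported so that [coord], [proj] and [order_set] refer to Defs rather
   than to the homonymous MathComp constants loaded above. *)
Import Defs.
From HB Require Import structures.
From mathcomp Require Import all_boot all_order all_algebra.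
From mathcomp Require Import all_classical all_reals all_analysis.
From mathcomp Require Import measurable_realfun.
Set Implicit Arguments.
Unset Strict Implicit.
Import Defs.
Import Order.TTheory GRing.Theory Num.Theory.
Import numFieldNormedType.Exports.
Local Open Scope classical_set_scope.
Local Open Scope ring_scope.

(* Fix x, y in R^n and put w = (x, y) in R^(2n).  By consistency, K^(n) f
   evaluated at x, at y, at x \/ y and at x /\ y is the integral against
   K^(2n)(w, .) of f composed with a coordinate projection: onto the first
   half, onto the second half, and onto the coordinates [join_index x y]
   (resp. [meet_index x y]) at which w attains max(x_j, y_j) (resp. the min).
   Since K^(2n) is order-preserving, K^(2n)(w, .) is carried by the order set
   of w, on which the last two projections are exactly the join and the meet
   of the first two; supermodularity of f then holds pointwise on a set of
   full measure, and integrating it gives supermodularity of K^(n) f. *)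

Lemma bounded_fun_R_comp (T U : Type) (R : realType) (f : U -> R) (g : T -> U) :
  bounded_fun_R f -> bounded_fun_R (f \o g).
Proof. by move=> [M fM]; exists M => t; exact: fM. Qed.

Section borel_Rn.
Context {R : realType}.

Lemma Rn_open_measurable n (A : set 'rV[R]_n) :
  open A -> measurable (A : set (Rn R n)).
Proof. exact: sub_sigma_algebra. Qed.

Lemma Rn_closed_measurable n (A : set 'rV[R]_n) :
  closed A -> measurable (A : set (Rn R n)).
Proof.
move=> cA; rewrite -[A]setCK; apply: measurableC.
by apply: Rn_open_measurable; exact: closed_openC.
Qed.

Lemma continuous_measurable_fun_Rn n k (g : 'rV[R]_n -> 'rV[R]_k) :
  continuous g -> measurable_fun setT (g : Rn R n -> Rn R k).
Proof.
move=> cg; apply: measurability => // _ [B oB <-].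
by rewrite setTI; apply: Rn_open_measurable; exact: open_comp.
Qed.

Lemma continuous_proj n k (idx : 'I_k -> 'I_n) :
  continuous (proj idx : 'rV[R]_n -> 'rV[R]_k).
Proof.
move=> u A /nbhs_ballP[e /= e0 eA]; apply/nbhs_ballP; exists e => //= v [_ uv].
by apply: eA; split => // i j; rewrite !mxE; exact: (uv ord0 (idx j)).
Qed.

Lemma measurable_proj n k (idx : 'I_k -> 'I_n) :
  measurable_fun setT (proj idx : Rn R n -> Rn R k).
Proof. apply: continuous_measurable_fun_Rn; exact: continuous_proj. Qed.

Lemma closed_order_set n (w : Rn R n) : closed (order_set w : set 'rV[R]_n).
Proof.
have -> : order_set w = \bigcap_(i in setT) \bigcap_(j in [set j | coord w i <= coord w j])
    (fun y : 'rV[R]_n => coord y j - coord y i) @^-1` [set r | 0 <= r].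
  apply/seteqP; split => [y wy i _ j /wy|y wy i j wij]; first by rewrite /= subr_ge0.
  by rewrite -subr_ge0; exact: (wy i I j wij).
apply: closed_bigI => i _; apply: closed_bigI => j _.
apply: preimage_closed; last exact: closed_ge.
by move=> y _; apply: continuousB; exact: coord_continuous.
Qed.

Lemma measurable_order_set n (w : Rn R n) : measurable (order_set w).
Proof. apply: Rn_closed_measurable; exact: closed_order_set. Qed.

End borel_Rn.

Section lattice_embedding.
Context {R : realType} (n : nat).
Implicit Types x y : Rn R n.

Definition join_index x y (j : 'I_n) : 'I_(n + n) :=
  if coord x j <= coord y j then rshift n j else lshift n j.

Definition meet_index x y (j : 'I_n) : 'I_(n + n) :=
  if coord x j <= coord y j then lshift n j else rshift n j.

Lemma proj_row_mxl x y : proj (@lshift n n) (row_mx x y : Rn R (n + n)) = x.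
Proof. by apply/rowP => j; rewrite mxE /coord row_mxEl. Qed.

Lemma proj_row_mxr x y : proj (@rshift n n) (row_mx x y : Rn R (n + n)) = y.
Proof. by apply/rowP => j; rewrite mxE /coord row_mxEr. Qed.

Lemma proj_join_index x y (v : Rn R (n + n)) :
  order_set (row_mx x y : Rn R (n + n)) v ->
  proj (join_index x y) v = vmax (proj (@lshift n n) v) (proj (@rshift n n) v).
Proof.
move=> wv; apply/rowP => j; rewrite /vmax /join_index /coord !mxE.
case: ifP => xy.
- by rewrite max_r //; apply: wv; rewrite /coord row_mxEl row_mxEr.
- rewrite max_l //; apply: wv; rewrite /coord row_mxEl row_mxEr.
  by rewrite ltW // ltNge /coord xy.
Qed.

Lemma proj_meet_index x y (v : Rn R (n + n)) :
  order_set (row_mx x y : Rn R (n + n)) v ->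
  proj (meet_index x y) v = vmin (proj (@lshift n n) v) (proj (@rshift n n) v).
Proof.
move=> wv; apply/rowP => j; rewrite /vmin /meet_index /coord !mxE.
case: ifP => xy.
- by rewrite min_l //; apply: wv; rewrite /coord row_mxEl row_mxEr.
- rewrite min_r //; apply: wv; rewrite /coord row_mxEl row_mxEr.
  by rewrite ltW // ltNge /coord xy.
Qed.

Lemma proj_join_index_row_mx x y :
  proj (join_index x y) (row_mx x y : Rn R (n + n)) = vmax x y.
Proof. by rewrite proj_join_index ?proj_row_mxl ?proj_row_mxr. Qed.

Lemma proj_meet_index_row_mx x y :
  proj (meet_index x y) (row_mx x y : Rn R (n + n)) = vmin x y.
Proof. by rewrite proj_meet_index ?proj_row_mxl ?proj_row_mxr. Qed.

End lattice_embedding.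

Section Rintegral_facts.
Context {R : realType} d (T : measurableType d) (mu : {measure set T -> \bar R}).

Lemma bounded_integrable (f : T -> R) : (mu setT < +oo)%E ->
  bounded_fun_R f -> measurable_fun setT f -> mu.-integrable setT (EFin \o f).
Proof.
move=> muT [M fM] mf; apply: measurable_bounded_integrable => //.
exists M; split; first exact: num_real.
by move=> r Mr x _ /=; rewrite (le_trans (fM x)) // ltW.
Qed.

Lemma le_Rintegral_conull (S : set T) (f g : T -> R) :
  measurable S -> mu (~` S) = 0%E ->
  mu.-integrable setT (EFin \o f) -> mu.-integrable setT (EFin \o g) ->
  (forall x, S x -> f x <= g x) ->
  Rintegral mu setT f <= Rintegral mu setT g.
Proof.
move=> mS muS0 intf intg fg; have mSC : measurable (~` S) by exact: measurableC.
rewrite /Rintegral (negligible_integral mSC _ intf) // (negligible_integral mSC _ intg) //.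
rewrite setTD setCK; apply: le_Rintegral => //.
- exact: integrableS intf.
- exact: integrableS intg.
Qed.

Lemma Rintegral_pushforward d' (U : measurableType d') (nu : {measure set U -> \bar R})
    (phi : T -> U) (f : U -> R) :
  measurable_fun setT phi -> (forall B, measurable B -> nu B = mu (phi @^-1` B)) ->
  measurable_fun setT f -> mu.-integrable setT (EFin \o (f \o phi)) ->
  Rintegral nu setT f = Rintegral mu setT (f \o phi).
Proof.
move=> mphi nuE mf intf.
have mEf : measurable_fun setT (EFin \o f : U -> \bar R) by exact/measurable_EFinP.
rewrite -(preimage_setT phi) in intf.
rewrite /Rintegral -(preimage_setT phi) -(integral_pushforward mphi mEf intf) //.
by congr fine; apply: eq_measure_integral => B mB _; rewrite nuE.
Qed.

End Rintegral_facts.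

Section probability_kernel.
Context {R : realType} d d' (X : measurableType d) (Y : measurableType d').
Variable k : R.-pker X ~> Y.

Lemma kernel_bounded_integrable x (f : Y -> R) :
  bounded_fun_R f -> measurable_fun setT f -> (k x).-integrable setT (EFin \o f).
Proof. by apply: bounded_integrable; rewrite prob_kernel ltry. Qed.

Lemma kernel_setC_eq0 x (S : set Y) : measurable S -> k x S = 1%E -> k x (~` S) = 0%E.
Proof.
move=> mS kS; have kT : (k x setT < +oo)%E by rewrite prob_kernel ltry.
rewrite -setTD measureD // setTI; transitivity (1 - 1 : \bar R)%E; last exact: subee.
by congr (_ - _)%E; [exact: prob_kernel | exact: kS].
Qed.

Lemma bounded_Rintegral_kernel (f : Y -> R) :
  bounded_fun_R f -> measurable_fun setT f ->
  bounded_fun_R (fun x => Rintegral (k x) setT f).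
Proof.
move=> bf mf; have [M fM] := bf; exists M => x.
have intf := kernel_bounded_integrable x bf mf.
apply: le_trans (le_normr_Rintegral measurableT intf) _.
have intM : (k x).-integrable setT (EFin \o cst M).
  by apply: kernel_bounded_integrable => //; exists `|M|.
have int_absf : (k x).-integrable setT (EFin \o (Num.norm \o f)) by exact: integrable_norm.
apply: le_trans (le_Rintegral measurableT int_absf intM (fun y _ => fM y)) _.
by rewrite Rintegral_cst // prob_kernel mulr1.
Qed.

Lemma measurable_Rintegral_kernel (f : Y -> R) :
  bounded_fun_R f -> measurable_fun setT f ->
  measurable_fun setT (fun x => Rintegral (k x) setT f).
Proof.
move=> bf mf; have mEf : measurable_fun setT (EFin \o f : Y -> \bar R).
  exact/measurable_EFinP.
have -> : (fun x => Rintegral (k x) setT f) = fun x =>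
    fine (\int[k x]_y (EFin \o f)^\+ y) - fine (\int[k x]_y (EFin \o f)^\- y).
  apply/funext => x; have intf := kernel_bounded_integrable x bf mf.
  rewrite /Rintegral integralE fineB //; apply: integrable_fin_num => //.
  - exact: integrable_funepos.
  - exact: integrable_funeneg.
have mk U : measurable U -> measurable_fun setT (k ^~ U) by exact: measurable_kernel.
apply: measurable_funB; apply: measurableT_comp; try exact: fine_measurable.
- by apply: measurable_fun_integral_kernel => //; exact: measurable_funepos.
- by apply: measurable_fun_integral_kernel => //; exact: measurable_funeneg.
Qed.

End probability_kernel.

Section consistent_family.
Context {R : realType} (K : forall n : nat, R.-pker (Rn R n) ~> Rn R n).
Hypothesis K_consistent : consistent K.

Lemma kapply_proj m k (idx : 'I_k -> 'I_m) (z : Rn R m) (f : Rn R k -> R) :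
  (1 <= k)%N -> (k <= m)%N -> bounded_fun_R f -> measurable_fun setT f ->
  kapply (K k) f (proj idx z) = Rintegral (K m z) setT (f \o proj idx).
Proof.
move=> k_gt0 km bf mf; apply: (Rintegral_pushforward (measurable_proj idx) _ mf).
- by move=> B mB; rewrite K_consistent.
- apply: kernel_bounded_integrable; first exact: bounded_fun_R_comp.
  exact: measurableT_comp mf (measurable_proj idx).
Qed.

Hypothesis K_order_preserving : forall n, (1 <= n)%N -> order_preserving (K n).

Lemma supermodular_kapply n (f : Rn R n -> R) : (1 <= n)%N ->
  bounded_fun_R f -> measurable_fun setT f -> supermodular f ->
  supermodular (kapply (K n) f).
Proof.
move=> n_gt0 bf mf sf x y; pose w : Rn R (n + n) := row_mx x y.
have lift idx u : proj idx w = u ->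
    kapply (K n) f u = Rintegral (K (n + n) w) setT (f \o proj idx).
  by move=> <-; apply: kapply_proj => //; exact: leq_addr.
have int idx : (K (n + n) w).-integrable setT (EFin \o (f \o proj idx)).
  apply: kernel_bounded_integrable; first exact: bounded_fun_R_comp.
  exact: measurableT_comp mf (measurable_proj idx).
rewrite (lift _ _ (proj_row_mxl x y)) (lift _ _ (proj_row_mxr x y)).
rewrite (lift _ _ (proj_join_index_row_mx x y)) (lift _ _ (proj_meet_index_row_mx x y)).
rewrite -!(RintegralD measurableT (int _) (int _)).
have mS := measurable_order_set w; apply: (le_Rintegral_conull mS).
- by apply: kernel_setC_eq0 mS _; apply: K_order_preserving; rewrite addn_gt0 n_gt0.
- exact: (integrableD measurableT (int _) (int _)).
- exact: (integrableD measurableT (int _) (int _)).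
by move=> v wv /=; rewrite proj_join_index // proj_meet_index //; exact: sf.
Qed.

End consistent_family.

Theorem proposition4p1 (R : realType)
  (K : forall n : nat, R.-pker (Rn R n) ~> (Rn R n)) :
  consistent K ->
  (forall n : nat, (1 <= n)%N -> order_preserving (K n)) ->
  forall n : nat, (2 <= n)%N ->
  forall f : Rn R n -> R,
    bounded_fun_R f -> measurable_fun setT f -> supermodular f ->
    bounded_fun_R (kapply (K n) f) /\
    measurable_fun setT (kapply (K n) f) /\
    supermodular (kapply (K n) f).
Proof.
move=> cK opK n n_ge2 f bf mf sf; split; first exact: bounded_Rintegral_kernel.
split; first exact: measurable_Rintegral_kernel.
by apply: supermodular_kapply => //; exact: ltnW.
Qed.
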